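(* Let $n\ge 1$. For a permutation $\pi\in S_n$, let $\Phi_2(\pi)$ be the deco polyomino of height $n$ whose code $(a_n,a_{n-1},\ldots,a_1)$ equals the right inversion vector $(c_1,c_2,\ldots,c_n)$ of $\pi$, i.e. $a_{n+1-i}=c_i$ for $i=1,\ldots,n$. Then $\pi$ is $321$-avoiding if and only if $\Phi_2(\pi)$ is a parallelogram polyomino.
   Context: Cells are unit squares $[i,i+1]\times[j,j+1]$ with integer $i,j$; a polyomino is a finite edge-connected set of cells, up to translation. A directed polyomino has a distinguished cell (the source) such that every cell can be reached from the source by a path of cells moving only North or East inside the polyomino. It is column-convex if each column (intersection with a vertical strip $[i,i+1]\times\mathbb{R}$) is connected. The (directed) height of a directed polyomino is the number of distinct diagonal lines $x+y=\text{const}$ passing through centers of its cells. A deco polyomino is a directed column-convex polyomino whose height is attained only in its last (rightmost) column, i.e. cells on the maximal diagonal lie only in the last column. Every deco polyomino of height $n$ is built uniquely by a sequence of $n$ steps starting from the empty polyomino; at step $j$ ($j=1,\ldots,n$) one performs either an elevation (add a cell at the bottom of the leftmost column of the current polyomino; step 1 is always of this kind) or a column pasting (add a new column of $k$ cells, $1\le k\le j-1$, to the left of the current polyomino so that the bottoms of the first two columns lie at the same level). Set $a_j=0$ for an elevation and $a_j=k$ for pasting a column of length $k$; the code of the polyomino is $(a_n,a_{n-1},\ldots,a_1)$, with $0\le a_j\le j-1$, and this gives a bijection between deco polyominoes of height $n$ and such sequences. The right inversion vector of $\pi=\pi_1\cdots\pi_n$ is $(c_1,\ldots,c_n)$ with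 $c_i=\#\{j>i:\pi_j<\pi_i\}$; it determines $\pi$ uniquely and $0\le c_i\le n-i$. A permutation is $321$-avoiding if there are no indices $i<j<k$ with $\pi_i>\pi_j>\pi_k$. A parallelogram polyomino is a polyomino bounded by two lattice paths using steps $(1,0)$ and $(0,1)$ which intersect only at their common origin and common endpoint. *)

From HB Require Import structures.
From mathcomp Require Import all_boot all_order all_fingroup all_algebra.
Set Implicit Arguments. Unset Strict Implicit. Unset Printing Implicit Defensive.
Import Order.TTheory GRing.Theory Num.Theory.

(* A cell (i,j) : int * int is the unit square [i,i+1] x [j,j+1].
   A polyomino (fixed representative of its translation class) is
   represented as a predicate on cells. *)
Definition cell := (int * int)%type.

Definition right_inv_vector (n : nat) (pi : 'S_n) : seq nat :=
  [seq #|[set j : 'I_n | (i < j)%N && (pi j < pi i)%N]| | i : 'I_n <- enum 'I_n].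

Definition avoids321 (n : nat) (pi : 'S_n) : Prop :=
  ~ exists i j k : 'I_n,
      [/\ (i < j)%N, (j < k)%N, (pi j < pi i)%N & (pi k < pi j)%N].

(* A column-convex polyomino built during the deco construction is stored as
   the list of its columns from left to right; column number x (starting at 0)
   is (b, l): its cells are (x, y) with b <= y < b + l. *)
Definition columns := seq (int * nat).

(* One step of the construction with letter a:
   a = 0 : elevation (add a cell at the bottom of the leftmost column;
           on the empty polyomino this creates a single cell);
   a = k > 0 : paste a new column of k cells to the left, with its bottom
           at the level of the bottom of the current first column. *)
Definition deco_step (cols : columns) (a : nat) : columns :=
  if a == 0%N then
    match cols with
    | [::] => [:: (0%R, 1%N)]
    | (b, l) :: r => ((b - 1)%R, l.+1) :: r
    end
  else
    match cols with
    | [::] => [:: (0%R, a)]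
    | (b, l) :: r => (b, a) :: cols
    end.

(* The deco polyomino with code (a_n, ..., a_1): steps j = 1, ..., n
   perform letter a_j.  [code] is the sequence [:: a_n; ...; a_1]. *)
Definition deco_of_code (code : seq nat) : columns :=
  foldl deco_step [::] (rev code).

Definition cells_of (cols : columns) (c : cell) : Prop :=
  exists2 i, (i < size cols)%N &
    c.1 = (i%:Z)%R /\ ((nth (0%R, 0%N) cols i).1 <= c.2 <
                        (nth (0%R, 0%N) cols i).1 + ((nth (0%R, 0%N) cols i).2)%:Z)%R.

Definition Phi2 (n : nat) (pi : 'S_n) : columns :=
  deco_of_code (right_inv_vector pi).

(* A lattice path from origin o is a sequence of steps:
   true = East step (1,0), false = North step (0,1). *)
Definition path_pos (o : int * int) (s : seq bool) (k : nat) : int * int :=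
  ((o.1 + (count id (take k s))%:Z)%R, (o.2 + (count negb (take k s))%:Z)%R).

Definition east_step_at (o : int * int) (s : seq bool) (k : nat) (x y : int) :=
  [/\ (k < size s)%N, nth false s k = true & path_pos o s k = (x, y)].

Definition enclosed (o : int * int) (s t : seq bool) (c : cell) : Prop :=
  exists k1 k2 h1 h2,
    [/\ east_step_at o s k1 c.1 h1, east_step_at o t k2 c.1 h2 &
        ((h1 <= c.2 < h2)%R \/ (h2 <= c.2 < h1)%R)].

(* P is a parallelogram polyomino: it is the region bounded by two lattice
   paths with unit North/East steps having a common origin and a common
   endpoint and meeting at no other lattice point (two such paths share a
   point iff they share a lattice vertex). *)
Definition parallelogram (P : cell -> Prop) : Prop :=
  exists (o : int * int) (s t : seq bool),
    [/\ path_pos o s (size s) = path_pos o t (size t),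
        (forall k1 k2, (k1 <= size s)%N -> (k2 <= size t)%N ->
           path_pos o s k1 = path_pos o t k2 ->
           (k1 = 0%N /\ k2 = 0%N) \/ (k1 = size s /\ k2 = size t)) &
        (forall c, P c <-> enclosed o s t c)].

(* The deco polyomino of a code is a stack of columns in which consecutive columns
   overlap; such a stack is a parallelogram polyomino exactly when the tops of its columns
   weakly increase, i.e. when every pasted column is no longer than the first column it is
   pasted to.  For the right inversion vector c of pi the first column of the polyomino
   coded by c_j, ..., c_(n-1) has length #{k >= j | pi_k < pi_m}, with m the first
   position >= j where pi_m is not a right-to-left minimum.  So the pastings fit iff the
   entries of pi that are not right-to-left minima increase, which is the classical
   characterization of 321-avoiding permutations. *)

From mathcomp Require Import all_boot all_order all_fingroup all_algebra.
From mathcomp Require Import zify.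
Import Order.TTheory GRing.Theory Num.Theory.
Set Implicit Arguments. Unset Strict Implicit.

Local Open Scope ring_scope.

Definition step_end (o : int * int) (b : bool) : int * int :=
  (o.1 + (b : nat)%:Z, o.2 + (~~ b : nat)%:Z).

Lemma path_pos0 o s : path_pos o s 0 = o.
Proof. by case: o => x y; rewrite /path_pos take0 /= !addr0. Qed.

Lemma path_posS o b s k : path_pos o (b :: s) k.+1 = path_pos (step_end o b) s k.
Proof. by rewrite /path_pos /step_end; case: b => /=; rewrite !PoszD !addrA ?addr0. Qed.

Lemma path_pos_catr o p s k :
  path_pos o (p ++ s) (size p + k) = path_pos (path_pos o p (size p)) s k.
Proof.
rewrite /path_pos takeD take_size_cat // drop_size_cat // take_size.
by rewrite !count_cat !PoszD !addrA.
Qed.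

Lemma path_pos_catl o p s k : (k <= size p)%N -> path_pos o (p ++ s) k = path_pos o p k.
Proof. by move=> hk; rewrite /path_pos takel_cat. Qed.

Lemma path_pos_north o m k : (k <= m)%N -> path_pos o (nseq m false) k = (o.1, o.2 + k%:Z).
Proof. by move=> hk; rewrite /path_pos take_nseq // !count_nseq /= mul0n addr0 mul1n. Qed.

Lemma east_step_at0 o b s x y : east_step_at o (b :: s) 0 x y <-> b /\ o = (x, y).
Proof. by rewrite /east_step_at path_pos0; split => [[]|[-> ->]]. Qed.

Lemma east_step_atS o b s k x y :
  east_step_at o (b :: s) k.+1 x y <-> east_step_at (step_end o b) s k x y.
Proof. by rewrite /east_step_at path_posS /= ltnS. Qed.

Lemma east_step_at_north_cat o m s k x y :
  east_step_at o (nseq m false ++ s) k x y <->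
  exists2 k', k = (m + k')%N & east_step_at (o.1, o.2 + m%:Z) s k' x y.
Proof.
have eo : path_pos o (nseq m false) m = (o.1, o.2 + m%:Z) by rewrite path_pos_north.
split.
  case=> hk hb hp; have hmk : (m <= k)%N.
    by rewrite leqNgt; apply/negP => hkm; rewrite nth_cat size_nseq hkm nth_nseq hkm in hb.
  exists (k - m)%N; first by rewrite subnKC.
  rewrite -eo; split; first by move: hk; rewrite size_cat size_nseq; lia.
    by rewrite nth_cat size_nseq ltnNge hmk /= in hb.
  by have := path_pos_catr o (nseq m false) s (k - m); rewrite size_nseq subnKC // => <-.
move=> [k' -> [hk hb hp]]; split.
- by rewrite size_cat size_nseq ltn_add2l.
- by rewrite nth_cat size_nseq ltnNge leq_addr /= addKn.
- by have := path_pos_catr o (nseq m false) s k'; rewrite size_nseq eo => ->.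
Qed.

Lemma path_pos_sum o s k : (k <= size s)%N ->
  ((path_pos o s k).1 - o.1) + ((path_pos o s k).2 - o.2) = k%:Z.
Proof.
move=> hk; rewrite /path_pos /=.
have := count_predC id (take k s); rewrite size_takel //.
rewrite (@eq_count _ (predC id) negb) //; lia.
Qed.

Lemma path_pos_eq_start o s k : (k <= size s)%N -> path_pos o s k = o -> k = 0%N.
Proof. by move=> hk e; have := path_pos_sum o hk; rewrite e; lia. Qed.

Lemma path_pos_eq_end o s k : (k <= size s)%N ->
  path_pos o s k = path_pos o s (size s) -> k = size s.
Proof.
move=> hk e; have := path_pos_sum o hk; have := path_pos_sum o (leqnn (size s)).
by rewrite e; lia.
Qed.

Lemma count_take_mono (T : Type) (p : pred T) (s : seq T) :
  {homo (fun k => count p (take k s)) : k k' / (k <= k')%N}.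
Proof.
move=> k k' h /=; rewrite -(take_takel s h) -{2}(cat_take_drop k (take k' s)) count_cat.
exact: leq_addr.
Qed.

Lemma east_step_at_mono o s k k' x h x' h' :
  east_step_at o s k x h -> east_step_at o s k' x' h' -> x < x' -> h <= h'.
Proof.
case=> _ _ e1 [_ _ e2]; move: e1 e2; rewrite /path_pos => -[<- <-] [<- <-].
case: (leqP k' k) => hk.
  by have := count_take_mono id s hk; lia.
by have := count_take_mono negb s (ltnW hk); lia.
Qed.

Lemma path_pos_north_east o m s k :
  path_pos o (nseq m false ++ true :: s) (m + k.+1) = path_pos (o.1 + 1, o.2 + m%:Z) s k.
Proof.
have := path_pos_catr o (nseq m false) (true :: s) k.+1.
by rewrite size_nseq path_pos_north // path_posS /step_end /= addr0 => ->.
Qed.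

Fixpoint stair_path (y : int) (hs : seq int) (H : int) : seq bool :=
  if hs is h :: hs' then nseq (absz (h - y)) false ++ true :: stair_path h hs' H
  else nseq (absz (H - y)) false.

Lemma path_pos_stair_cons (x y h : int) hs H k : y <= h ->
  path_pos (x, y) (stair_path y (h :: hs) H) (absz (h - y) + k.+1) =
  path_pos (x + 1, h) (stair_path h hs H) k.
Proof. by move=> hy; rewrite /= path_pos_north_east; congr (path_pos (_, _)) => /=; lia. Qed.

Lemma stair_path_end (x y : int) (hs : seq int) (H : int) : path <=%R y (rcons hs H) ->
  path_pos (x, y) (stair_path y hs H) (size (stair_path y hs H)) = (x + (size hs)%:Z, H).
Proof.
elim: hs x y => [|h hs IH] x y /=.
  by rewrite andbT size_nseq => hy; rewrite path_pos_north //=; congr (_, _); lia.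
move=> /andP [hy hp]; rewrite size_cat size_nseq /=.
by rewrite (path_pos_stair_cons x hs H _ hy) IH //; congr (_, _); lia.
Qed.

Lemma stair_path_pos (x y : int) (hs : seq int) (H : int) k : path <=%R y (rcons hs H) ->
  (k <= size (stair_path y hs H))%N ->
  exists i, [/\ (i <= size hs)%N,
    (path_pos (x, y) (stair_path y hs H) k).1 = x + i%:Z &
    nth H (y :: hs) i <= (path_pos (x, y) (stair_path y hs H) k).2 <= nth H hs i].
Proof.
elim: hs x y k => [|h hs IH] x y k; rewrite ?rcons_cons [path _ _ _]/= => /andP [hy hp].
  rewrite [stair_path _ _ _]/= size_nseq => hk; exists 0%N.
  by rewrite path_pos_north // [_.1]/= [_.2]/= addr0; split => //=; lia.
rewrite [X in size X]/= size_cat size_nseq [size _]/= => hk.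
case: (leqP k (absz (h - y))) => hk1.
  exists 0%N; rewrite path_pos_catl ?size_nseq // path_pos_north // [_.1]/= [_.2]/= addr0.
  by split => //=; lia.
have [k' ek] : exists k', k = (absz (h - y) + k'.+1)%N.
  by exists (k - (absz (h - y)).+1)%N; lia.
have := path_pos_stair_cons x hs H k' hy; rewrite [stair_path _ _ _]/= -ek => ->.
have [|i [hi h1 h2]] := IH (x + 1) h k' hp; first by lia.
by exists i.+1; split => //; rewrite h1; lia.
Qed.

Lemma stair_path_east_stepP (x0 y : int) (hs : seq int) (H x h : int) :
  path <=%R y (rcons hs H) ->
  (exists k, east_step_at (x0, y) (stair_path y hs H) k x h) <->
  exists2 i, (i < size hs)%N & x = x0 + i%:Z /\ h = nth H hs i.
Proof.
elim: hs x0 y x h => [|h' hs IH] x' y x h /=.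
  by move=> _; split=> [[k [hk]]|[]] //; rewrite nth_nseq; case: ifP.
move=> /andP [hy hp].
have eo : (x', y + (absz (h' - y))%:Z) = (x', h') by congr (_, _); lia.
split.
  move=> [k /east_step_at_north_cat [[|k'] _]]; rewrite /= eo.
    by case/east_step_at0 => _ [<- <-]; exists 0%N => //; rewrite addr0.
  rewrite east_step_atS /step_end /= addr0 => hk.
  have [|i hi [-> ->]] := (IH (x' + 1) h' x h hp).1; first by exists k'.
  by exists i.+1 => //; split => //; lia.
move=> [[|i] hi [-> ->]].
  exists (absz (h' - y) + 0)%N; apply/east_step_at_north_cat; exists 0%N => //=.
  by rewrite eo; apply/east_step_at0; rewrite addr0.
have [|k hk] := (IH (x' + 1) h' (x' + i.+1%:Z) (nth H hs i) hp).2.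
  by exists i => //; split => //; lia.
exists (absz (h' - y) + k.+1)%N; apply/east_step_at_north_cat; exists k.+1 => //=.
by rewrite eo east_step_atS /step_end /= addr0.
Qed.

Lemma path_rcons_mkseq (T : Type) (e : rel T) (g : nat -> T) m y H : (0 < m)%N ->
  e y (g 0%N) -> (forall i, (i.+1 < m)%N -> e (g i) (g i.+1)) -> e (g m.-1) H ->
  path e y (rcons (mkseq g m) H).
Proof.
move=> hm h0 hs hH; apply/(pathP H) => i; rewrite size_rcons size_mkseq ltnS => hi.
rewrite nth_rcons_default; case: i hi => [|i] hi; first by rewrite /= nth_mkseq.
rewrite [nth _ (_ :: _) _]/= nth_rcons_default nth_mkseq //.
case: (ltnP i.+1 m) => him; first by rewrite nth_mkseq // hs.
by rewrite nth_default ?size_mkseq // (_ : i = m.-1) //; lia.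
Qed.

Definition col_top (col : int * nat) : int := col.1 + col.2%:Z.

Definition overlaps (col col' : int * nat) : bool :=
  (col.1 <= col'.1) && (col'.1 < col_top col).

Definition stacked (cols : columns) : bool :=
  all (fun col => 0 < col.2)%N cols && sorted overlaps cols.

Definition tops_sorted (cols : columns) : bool := sorted <=%R (map col_top cols).

Definition bot (cols : columns) i : int := (nth (0, 0%N) cols i).1.
Definition len (cols : columns) i : nat := (nth (0, 0%N) cols i).2.
Definition top (cols : columns) i : int := bot cols i + (len cols i)%:Z.

Section Columns.

Variable cols : columns.

Lemma stacked_len_gt0 i : stacked cols -> (i < size cols)%N -> (0 < len cols i)%N.
Proof. by case/andP=> /(all_nthP (0, 0%N)) hl _ /hl. Qed.

Lemma stacked_overlap i : stacked cols -> (i.+1 < size cols)%N ->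
  bot cols i <= bot cols i.+1 < top cols i.
Proof. by case/andP=> _ /(sortedP (0, 0%N)) hs /hs /andP [-> ->]. Qed.

Lemma tops_sortedP :
  reflect (forall i, (i.+1 < size cols)%N -> top cols i <= top cols i.+1) (tops_sorted cols).
Proof.
apply: (iffP (sortedP 0)); rewrite size_map => h i hi; have := h i hi;
  by rewrite !(nth_map (0, 0%N)) // ltnW.
Qed.

Lemma cells_ofP x y : cells_of cols (x, y) <->
  exists2 i, (i < size cols)%N & x = i%:Z /\ bot cols i <= y < top cols i.
Proof. by []. Qed.

(* The topmost cell of column i and the bottom cell of column i+1 are enclosed; since the
   East steps of each boundary path rise from column i to column i+1, so is the cell of
   column i+1 at the height of the former, i.e. that cell lies in column i+1. *)
Lemma parallelogram_tops_sorted :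
  stacked cols -> parallelogram (cells_of cols) -> tops_sorted cols.
Proof.
move=> hst [o [s [t [_ _ hc]]]]; apply/tops_sortedP => i hi.
have hl := stacked_len_gt0 hst (ltnW hi).
have hl' := stacked_len_gt0 hst hi.
have /andP [hb1 hb2] := stacked_overlap hst hi.
have /hc [k1 [k2 [h1 [h2 [e1 e2 d]]]]] : cells_of cols (i%:Z, top cols i - 1).
  by apply/cells_ofP; exists i; [exact: ltnW | split => //; rewrite /top; lia].
have /hc [k1' [k2' [h1' [h2' [e1' e2' d']]]]] : cells_of cols (i.+1%:Z, bot cols i.+1).
  by apply/cells_ofP; exists i.+1 => //; split => //; rewrite /top; lia.
have lt_col : i%:Z < i.+1%:Z by rewrite ltz_nat.
have m1 := east_step_at_mono e1 e1' lt_col.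
have m2 := east_step_at_mono e2 e2' lt_col.
have : cells_of cols (i.+1%:Z, top cols i - 1).
  by apply/hc; exists k1', k2', h1', h2'; split => //=; move: d d' => /=; lia.
by case/cells_ofP=> j _ [/eqP]; rewrite eqz_nat => /eqP <-; lia.
Qed.

End Columns.

Section Boundary.

Variable cols : columns.
Hypotheses (cols_stacked : stacked cols) (cols_tops : tops_sorted cols).
Hypothesis cols_gt0 : (0 < size cols)%N.

Local Notation m := (size cols).
Local Notation H := (top cols m.-1).
Local Notation o := ((0 : int), bot cols 0).
Local Notation lower := (stair_path (bot cols 0) (mkseq (bot cols) m) H).
Local Notation upper := (stair_path (bot cols 0) (mkseq (top cols) m) H).

Let lower_sorted : path <=%R (bot cols 0) (rcons (mkseq (bot cols) m) H).
Proof.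
apply: path_rcons_mkseq => // [i /(stacked_overlap cols_stacked) /andP [] //|].
have : (0 < len cols m.-1)%N by apply: stacked_len_gt0; rewrite // ltn_predL.
by rewrite /H /top; lia.
Qed.

Let upper_sorted : path <=%R (bot cols 0) (rcons (mkseq (top cols) m) H).
Proof.
apply: path_rcons_mkseq => //; last by move=> i /(tops_sortedP _ cols_tops).
by have := stacked_len_gt0 cols_stacked cols_gt0; rewrite /top; lia.
Qed.

Lemma boundary_end :
  path_pos o lower (size lower) = path_pos o upper (size upper).
Proof. by rewrite !stair_path_end // !size_mkseq. Qed.

(* A common point lies in some column i on both paths; strictly inside (0 < i < m) the
   lower path stays at or below bot i, which is below top (i-1), where the upper path is. *)
Lemma boundary_meet k1 k2 : (k1 <= size lower)%N -> (k2 <= size upper)%N ->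
  path_pos o lower k1 = path_pos o upper k2 ->
  (k1 = 0%N /\ k2 = 0%N) \/ (k1 = size lower /\ k2 = size upper).
Proof.
move=> hk1 hk2 e.
have [i [hi1 ex1 hy1]] := stair_path_pos 0 lower_sorted hk1.
have [j [hj1 ex2 hy2]] := stair_path_pos 0 upper_sorted hk2.
rewrite size_mkseq in hi1 hj1; rewrite e in ex1 hy1.
case E: (path_pos _ _ k2) e ex1 ex2 hy1 hy2 => [x y] e /= ex1 ex2 hy1 hy2.
have eij : i = j by lia.
subst j; case: i hi1 hj1 ex1 ex2 hy1 hy2 => [|i] hi1 _ ex1 _.
  rewrite /= nth_mkseq //= => hy1 hy2; left.
  have eo : (x, y) = o by congr (_, _); lia.
  by rewrite eo in e E; split; apply: path_pos_eq_start; eassumption.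
case: (ltnP i.+1 m) => him.
  rewrite /= !nth_mkseq // ?(ltnW him) => h1 h2.
  by have /andP [_ hb] := stacked_overlap cols_stacked him; lia.
have ei : m.-1 = i by lia.
rewrite /= nth_mkseq // [nth H (mkseq (top cols) m) i.+1]nth_default ?size_mkseq //.
move=> _ hy2; right; rewrite ei in hy2.
have eo : (x, y) = path_pos o lower (size lower).
  rewrite stair_path_end // size_mkseq; congr (_, _); first by lia.
  by move: hy2; rewrite nth_mkseq // ei; lia.
split; [apply: (path_pos_eq_end (o := o) hk1) | apply: (path_pos_eq_end (o := o) hk2)].
  by rewrite e.
by rewrite E eo boundary_end.
Qed.

Lemma boundary_enclosed c : cells_of cols c <-> enclosed o lower upper c.
Proof.
case: c => x y; split.
  case/cells_ofP=> j hj [-> hy].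
  have [|k1 hk1] := (stair_path_east_stepP 0 j%:Z (bot cols j) lower_sorted).2.
    by exists j; rewrite ?size_mkseq ?nth_mkseq ?add0r.
  have [|k2 hk2] := (stair_path_east_stepP 0 j%:Z (top cols j) upper_sorted).2.
    by exists j; rewrite ?size_mkseq ?nth_mkseq ?add0r.
  by exists k1, k2, (bot cols j), (top cols j); split => //; left.
move=> [k1 [k2 [h1 [h2 [e1 e2 d]]]]].
have [i hi [ex1 eh1]] := (stair_path_east_stepP _ _ _ lower_sorted).1 (ex_intro _ k1 e1).
have [j hj [ex2 eh2]] := (stair_path_east_stepP _ _ _ upper_sorted).1 (ex_intro _ k2 e2).
rewrite size_mkseq in hi hj; rewrite /= in ex1 ex2.
have eij : i = j by lia.
subst j; rewrite nth_mkseq // in eh1; rewrite nth_mkseq // in eh2.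
apply/cells_ofP; exists i => //; split; first by lia.
by move: d; rewrite eh1 eh2 /=; rewrite /top; lia.
Qed.

Lemma tops_sorted_parallelogram : parallelogram (cells_of cols).
Proof.
exists o, lower, upper.
by split; [exact: boundary_end | exact: boundary_meet | exact: boundary_enclosed].
Qed.

End Boundary.

Definition deco_cols (code : seq nat) : columns :=
  foldr (fun a cols => deco_step cols a) [::] code.

Lemma deco_of_codeE code : deco_of_code code = deco_cols code.
Proof. by rewrite /deco_of_code foldl_rev. Qed.

Definition first_len (cols : columns) : nat := (head (0, 0%N) cols).2.

Lemma first_len_deco_step cols a :
  first_len (deco_step cols a) = if a == 0%N then (first_len cols).+1 else a.
Proof. by case: cols => [|[b l] r]; case: a. Qed.

Lemma stacked_deco_step cols a : stacked cols -> stacked (deco_step cols a).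
Proof.
rewrite /stacked; case: cols => [|[b l] r]; case: a => [|a] //= /andP [/andP [hl hall] hs].
  rewrite hall /=; case: r hs {hall} => [|[b' l'] r] //= /andP [/andP [h1 h2] ->].
  by move: h1 h2; rewrite /overlaps /col_top /= andbT; lia.
by rewrite hl hall hs /overlaps /col_top /= lexx /= andbT; lia.
Qed.

Lemma stacked_deco_cols code : stacked (deco_cols code).
Proof. by elim: code => [|a code IH] //=; apply: stacked_deco_step. Qed.

Lemma deco_cols_eq0 code : (deco_cols code == [::]) = (code == [::]).
Proof. by case: code => [|a code] //=; case: (deco_cols code) => [|[b l] r]; case: a. Qed.

Lemma tops_sorted_deco_step cols a : tops_sorted (deco_step cols a) =
  tops_sorted cols && [|| a == 0%N, cols == [::] | (a <= first_len cols)%N].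
Proof.
rewrite /tops_sorted; case: cols => [|[b l] r]; case: a => [|a] //=.
  by rewrite andbT /col_top /= (_ : b - 1 + l.+1%:Z = b + l%:Z) //; lia.
by rewrite /first_len /col_top /= lerD2l lez_nat andbC.
Qed.

(* Letter c_i is performed at step n - i, on the polyomino coded by the later letters:
   every pasted column is at most as long as the first column it is pasted to. *)
Definition pastings_fit (code : seq nat) : Prop :=
  forall i, (i.+1 < size code)%N ->
    nth 0%N code i = 0%N \/ (nth 0%N code i <= first_len (deco_cols (drop i.+1 code)))%N.

Lemma tops_sorted_decoP code : tops_sorted (deco_cols code) <-> pastings_fit code.
Proof.
elim: code => [|a code IH] //=.
rewrite tops_sorted_deco_step deco_cols_eq0; split.
  move=> /andP [/IH h1 h2] [|i] hi /=; last exact: h1.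
  rewrite drop0; case/or3P: h2 => [/eqP|/eqP|] h; [by left | | by right].
  by rewrite h in hi.
move=> h; apply/andP; split; first by apply/IH => i hi; apply: (h i.+1).
case: code h {IH} => [|a' code] h; first by rewrite orbT.
by case: (h 0%N isT) => /= [->|->]; rewrite ?orbT.
Qed.

Lemma parallelogram_decoP code : (0 < size code)%N ->
  parallelogram (cells_of (deco_cols code)) <-> pastings_fit code.
Proof.
move=> hc; rewrite -tops_sorted_decoP; have hst := stacked_deco_cols code.
split; first exact: parallelogram_tops_sorted.
move=> hts; apply: tops_sorted_parallelogram => //.
by rewrite lt0n size_eq0 deco_cols_eq0 -size_eq0 -lt0n.
Qed.

Local Close Scope ring_scope.

Lemma sub_count_lt (T : eqType) (a b : pred T) (s : seq T) x :
  subpred a b -> x \in s -> b x -> ~~ a x -> count a s < count b s.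
Proof.
move=> hab; elim: s => //= y s IH; rewrite in_cons => /orP [/eqP <-|hx] hb ha.
  by rewrite hb (negbTE ha) add0n add1n ltnS sub_count.
have := IH hx hb ha; case: (a y) (hab y) => [->|] //=; lia.
Qed.

Section InversionCode.

Variables (n : nat) (f : nat -> nat).
Hypothesis f_lt : forall j, j < n -> f j < n.
Hypothesis f_inj : forall j k, j < n -> k < n -> f j = f k -> j = k.

Definition inv_count i := count (fun k => (i < k) && (f k < f i)) (iota 0 n).

Definition avoids321_on := ~ exists i j k, [/\ i < j, j < k, k < n, f j < f i & f k < f j].

Lemma inv_countE i : i < n -> inv_count i = count (fun k => f k < f i) (iota i.+1 (n - i.+1)).
Proof.
move=> hi; rewrite /inv_count -{1}(subnKC hi) iotaD count_cat add0n.
rewrite (eq_in_count (a2 := pred0)) ?count_pred0; last first.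
  by move=> k; rewrite mem_iota /= => h; apply/negbTE; lia.
by apply: eq_in_count => k; rewrite mem_iota => /andP [-> _].
Qed.

Lemma inv_count_gt0P i :
  reflect (exists k, [/\ i < k, k < n & f k < f i]) (0 < inv_count i).
Proof.
rewrite /inv_count -has_count; apply: (iffP hasP) => [[k]|[k [h1 h2 h3]]].
  by rewrite mem_iota => /andP [_ hk] /andP [h1 h2]; exists k.
by exists k; [rewrite mem_iota; lia | rewrite h1].
Qed.

(* The classical characterization: the entries that are not right-to-left minima
   (those with a positive inversion count) increase. *)
Lemma avoids321_onE : avoids321_on <->
  forall i j, i < j -> j < n -> 0 < inv_count i -> 0 < inv_count j -> f i < f j.
Proof.
split=> [hav i j hij hj /inv_count_gt0P [k' [hik' hk' _]] /inv_count_gt0P [k [hjk hk hfk]]|].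
  rewrite ltnNge leq_eqVlt negb_or; apply/andP; split.
    by apply/eqP => e; have := f_inj (ltn_trans hij hj) hj (esym e); lia.
  by apply/negP => hfj; apply: hav; exists i, j, k.
move=> hinc [i [j [k [hij hjk hk hji hkj]]]].
have hci : 0 < inv_count i by apply/inv_count_gt0P; exists j; split => //; lia.
have hcj : 0 < inv_count j by apply/inv_count_gt0P; exists k.
by have := hinc i j hij (ltn_trans hjk hk) hci hcj; lia.
Qed.

Local Notation code := (mkseq inv_count n).

Definition next_nonmin j := head n [seq f k | k <- iota j (n - j) & 0 < inv_count k].

Lemma next_nonminS j : j < n ->
  next_nonmin j = if 0 < inv_count j then f j else next_nonmin j.+1.
Proof.
move=> hj; rewrite /next_nonmin (_ : n - j = (n - j.+1).+1); last lia.
by rewrite [iota _ _]/= /=; case: ifP.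
Qed.

Lemma next_nonminP j : next_nonmin j = n \/
  exists m, [/\ j <= m, m < n, 0 < inv_count m & next_nonmin j = f m].
Proof.
rewrite /next_nonmin.
case E: [seq k <- iota j (n - j) | 0 < inv_count k] => [|m s]; first by left.
have : m \in [seq k <- iota j (n - j) | 0 < inv_count k] by rewrite E mem_head.
by rewrite mem_filter mem_iota => /andP [hm /andP [h1 h2]]; right; exists m; split => //; lia.
Qed.

Lemma inv_count_eq0_lt j k : inv_count j = 0 -> j < k -> k < n -> f j < f k.
Proof.
move=> h0 hjk hk; rewrite ltnNge leq_eqVlt negb_or; apply/andP; split.
  by apply/eqP => e; have := f_inj (ltn_trans hjk hk) hk (esym e); lia.
apply/negP => hkj; suff : 0 < inv_count j by rewrite h0.
by apply/inv_count_gt0P; exists k.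
Qed.

Lemma next_nonmin_gt j k : j < n -> inv_count j = 0 -> j < k -> f j < next_nonmin k.
Proof.
move=> hj h0 hjk; have [->|[m [h1 h2 _ ->]]] := next_nonminP k; first exact: f_lt.
by apply: inv_count_eq0_lt; lia.
Qed.

(* If m is the first position >= j with c_m > 0, the first column of the polyomino coded
   by c_j, ..., c_(n-1) is the column of length c_m pasted by letter c_m, raised by the
   elevations c_(m-1) = ... = c_j = 0; the entries at positions j .. m-1 are right-to-left
   minima, hence all below f m. *)
Lemma first_len_deco_drop j : j <= n ->
  first_len (deco_cols (drop j code)) = count (fun k => f k < next_nonmin j) (iota j (n - j)).
Proof.
move=> hj; have [d ed] : exists d, n - j = d by eexists.
elim: d j hj ed => [|d IH] j hj ed.
  by rewrite ed drop_oversize // size_mkseq; lia.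
have hjn : j < n by lia.
rewrite (drop_nth 0) ?size_mkseq // nth_mkseq //.
rewrite -[deco_cols (_ :: _)]/(deco_step _ _) first_len_deco_step.
have -> : n - j = (n - j.+1).+1 by lia.
rewrite IH; [|lia|lia].
rewrite (next_nonminS hjn) -[iota j _]/(j :: iota j.+1 _) -cat1s count_cat /= addn0.
case: eqP => [h0|/eqP hc]; first by rewrite h0 /= next_nonmin_gt.
by rewrite lt0n hc ltnn inv_countE.
Qed.

Lemma pasting_fitsE i : i.+1 < n -> 0 < inv_count i ->
  (inv_count i <= first_len (deco_cols (drop i.+1 code))) = (f i < next_nonmin i.+1).
Proof.
move=> hi hci; have hi' := ltnW hi; rewrite first_len_deco_drop // inv_countE //.
apply/idP/idP => [hle|hlt]; last by apply: sub_count => k /= /ltn_trans; apply.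
rewrite ltnNge; apply/negP => hge.
have [e|[m [h1 h2 hcm e]]] := next_nonminP i.+1; rewrite e in hge.
  by have := f_lt hi'; lia.
have hfm : f m < f i.
  by rewrite ltn_neqAle hge andbT; apply/eqP => /(f_inj h2 hi'); lia.
move: hle; rewrite leqNgt e => /negP; apply.
apply: (sub_count_lt (x := m)) => [k /= hk|||]; rewrite ?mem_iota ?ltnn //.
  exact: ltn_trans hk hfm.
by lia.
Qed.

Lemma next_nonmin_le i j :
  (forall i, i.+1 < n -> 0 < inv_count i -> f i < next_nonmin i.+1) ->
  i <= j -> j < n -> 0 < inv_count j -> next_nonmin i <= f j.
Proof.
move=> hstep hij hj hcj; have [d ed] : exists d, j - i = d by eexists.
elim: d i hij ed => [|d IH] i hij ed.
  have -> : i = j by lia.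
  by rewrite next_nonminS // hcj.
have hij' : i < j by lia.
rewrite next_nonminS; last exact: leq_ltn_trans hij hj.
have ed' : j - i.+1 = d by rewrite subnS ed.
have := IH i.+1 hij' ed'.
by case: ifP => // hci; have := hstep i (leq_ltn_trans hij' hj) hci; lia.
Qed.

Lemma pastings_fit_codeE : pastings_fit code <->
  forall i j, i < j -> j < n -> 0 < inv_count i -> 0 < inv_count j -> f i < f j.
Proof.
have hsz : size code = n by rewrite size_mkseq.
split=> [hfit|hinc i].
  have hstep i : i.+1 < n -> 0 < inv_count i -> f i < next_nonmin i.+1.
    move=> hi hci; have hi' := ltnW hi; rewrite -pasting_fitsE //.
    have := hfit i; rewrite hsz nth_mkseq // => /(_ hi) [h0|//].
    by rewrite h0 in hci.
  move=> i j hij hj hci hcj.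
  have := hstep i (leq_ltn_trans hij hj) hci; have := next_nonmin_le hstep hij hj hcj; lia.
rewrite hsz => hi; have hi' := ltnW hi; rewrite nth_mkseq //.
case: (posnP (inv_count i)) => [|hci]; [by left | right].
rewrite pasting_fitsE //; have [->|[m [h1 h2 hcm ->]]] := next_nonminP i.+1; first exact: f_lt.
exact: hinc.
Qed.

Lemma pastings_fit_avoids321 : pastings_fit code <-> avoids321_on.
Proof.
by split=> [/pastings_fit_codeE h | /avoids321_onE h];
  [apply/avoids321_onE | apply/pastings_fit_codeE].
Qed.

End InversionCode.

Definition perm_fun n (pi : 'S_n) (j : nat) : nat := oapp (fun i => val (pi i)) 0 (insub j).

Lemma perm_funE n (pi : 'S_n) (i : 'I_n) : perm_fun pi i = pi i.
Proof. by rewrite /perm_fun valK. Qed.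

Lemma perm_fun_lt n (pi : 'S_n) j : j < n -> perm_fun pi j < n.
Proof. by move=> hj; rewrite -[j]/(val (Ordinal hj)) perm_funE. Qed.

Lemma perm_fun_inj n (pi : 'S_n) j k :
  j < n -> k < n -> perm_fun pi j = perm_fun pi k -> j = k.
Proof.
move=> hj hk; rewrite -[j]/(val (Ordinal hj)) -[k]/(val (Ordinal hk)) !perm_funE.
by move/val_inj/perm_inj => ->.
Qed.

Lemma card_set_count (T : finType) (P : pred T) : #|[set x | P x]| = count P (enum T).
Proof. by rewrite enumT cardsE cardE /enum_mem size_filter. Qed.

Lemma right_inv_vectorE n (pi : 'S_n) :
  right_inv_vector pi = mkseq (inv_count n (perm_fun pi)) n.
Proof.
rewrite /right_inv_vector /mkseq -val_enum_ord -map_comp; apply: eq_map => i /=.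
rewrite card_set_count /inv_count -val_enum_ord count_map.
by apply: eq_count => j /=; rewrite !perm_funE.
Qed.

Lemma avoids321E n (pi : 'S_n) : avoids321 pi <-> avoids321_on n (perm_fun pi).
Proof.
split=> hav [i [j [k hijk]]]; apply: hav.
  case: hijk => hij hjk hk.
  have hj := ltn_trans hjk hk; have hi := ltn_trans hij hj.
  exists (Ordinal hi), (Ordinal hj), (Ordinal hk).
  by rewrite -!perm_funE; split.
by exists i, j, k; rewrite !perm_funE; case: hijk.
Qed.

Theorem mainTheorem1 (n : nat) (hn : (0 < n)%N) (pi : 'S_n) :
  avoids321 pi <-> parallelogram (cells_of (Phi2 pi)).
Proof.
rewrite /Phi2 right_inv_vectorE deco_of_codeE parallelogram_decoP ?size_mkseq //.
rewrite pastings_fit_avoids321 ?avoids321E //.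
- exact: perm_fun_lt.
- exact: perm_fun_inj.
Qed.
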